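(* Let $n \geq 2$, $N = \{1,\dots,n\}$, and $\epsilon \in (0,1)$. For each $i \in N$ let $\pi_i : 2^{N\setminus\{i\}} \to \mathbb{R}_{\geq 0}$ be a local score function, and let $\tilde\pi_i$ be the $(\epsilon/n)$-pruning of $\pi_i$ (with $V = N \setminus \{i\}$, $K = n-1$). For a DAG on $N$ with arc set $A$ let $\pi(A) = \prod_{i \in N} \pi_i(A_i)$ and $\tilde\pi(A) = \prod_{i\in N} \tilde\pi_i(A_i)$, where $A_i = \{j : ji \in A\}$. Let $Z = \sum_A \pi(A)$ and $\tilde Z = \sum_A \tilde\pi(A)$, the sums ranging over all arc sets $A$ of DAGs on $N$, and assume $Z > 0$. Then: (i) $\tilde Z \geq (1-\epsilon) Z$; (ii) the Kullback–Leibler divergence $\sum_{A:\,\tilde\pi(A)>0} \frac{\tilde\pi(A)}{\tilde Z}\ln\frac{\tilde\pi(A)/\tilde Z}{\pi(A)/Z}$ of the distribution $\tilde\pi/\tilde Z$ from $\pi/Z$ is at most $\epsilon/(1-\epsilon)$; (iii) the total variation distance $\tfrac12\sum_A \bigl|\pi(A)/Z - \tilde\pi(A)/\tilde Z\bigr|$ is at most $\epsilon$.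
   Context: For $g : 2^V \to \mathbb{R}_{\geq 0}$ on a finite set $V$ with $K = |V|$ elements and $\eta \geq 0$: for $j \in S \subseteq V$ let $\psi(j,S) = \sum_{R:\, j \in R \subseteq S} g(R)\,(1+1/K)^{|R|-K} K^{|R|-|S|}$. The $\eta$-pruning of $g$ is the function $\tilde g$ with $\tilde g(S) = 0$ if $S \neq \emptyset$ and $g(S) < \eta\,\psi(j,S)$ for every $j \in S$, and $\tilde g(S) = g(S)$ otherwise. *)

From HB Require Import structures.
From mathcomp Require Import all_boot all_order all_algebra fingraph.
From mathcomp Require Import reals exp.
Set Implicit Arguments. Unset Strict Implicit. Unset Printing Implicit Defensive.
Import Order.TTheory GRing.Theory Num.Theory.
Local Open Scope ring_scope.

Section Pruning.
Variables (R : realType) (T : finType).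

Definition prune_psi (V : {set T}) (g : {set T} -> R) (j : T) (S : {set T}) : R :=
  let K := #|V| in
  \sum_(Rs : {set T} | (j \in Rs) && (Rs \subset S))
     g Rs * (1 + K%:R^-1) ^ (#|Rs|%:Z - K%:Z) * K%:R ^ (#|Rs|%:Z - #|S|%:Z).

Definition prune (V : {set T}) (g : {set T} -> R) (eta : R) (S : {set T}) : R :=
  if (S != set0) && [forall j in S, g S < eta * prune_psi V g j S] then 0 else g S.
End Pruning.

Section DAGs.
Variables (R : realType) (n : nat).

Definition arc_rel (A : {set 'I_n * 'I_n}) : rel 'I_n := fun x y => (x, y) \in A.

(* A is the arc set of a DAG: no arc (i,j) is closed into a cycle by a path j ->* i
   (this also excludes self-loops) *)
Definition is_dag (A : {set 'I_n * 'I_n}) : bool :=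
  [forall p in A, ~~ connect (arc_rel A) p.2 p.1].

Definition parents (A : {set 'I_n * 'I_n}) (i : 'I_n) : {set 'I_n} :=
  [set j | (j, i) \in A].

Definition score (pi : 'I_n -> {set 'I_n} -> R) (A : {set 'I_n * 'I_n}) : R :=
  \prod_(i < n) pi i (parents A i).

Definition partition_fn (pi : 'I_n -> {set 'I_n} -> R) : R :=
  \sum_(A : {set 'I_n * 'I_n} | is_dag A) score pi A.

Definition pruned_scores (pi : 'I_n -> {set 'I_n} -> R) (eps : R) :
  'I_n -> {set 'I_n} -> R :=
  fun i => prune [set~ i] (pi i) (eps / n%:R).
End DAGs.

From HB Require Import structures.
From mathcomp Require Import all_boot all_order all_algebra fingraph.
From mathcomp Require Import reals exp.
From mathcomp Require Import ring lra.
Import Order.TTheory GRing.Theory Num.Theory.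
Local Open Scope ring_scope.
Set Implicit Arguments. Unset Strict Implicit. Unset Printing Implicit Defensive.

(* A DAG loses its score under pruning only if some node i is pruned, i.e.
   pi_i(A_i) < (eps/n) psi(j, A_i) for all j in A_i.  Expanding psi bounds the
   score of such a DAG by (eps/n) times a weighted sum of the scores of the DAGs
   A[i := R] obtained by replacing the parents of i by a subset R of A_i.  As
   (A, R) |-> (A[i := R], A_i) is injective and the weights of the supersets of
   R sum to 1, the DAGs pruned at i carry at most (eps/n) Z, so at most eps Z is
   lost in total.  The pruned distribution is pi/Z conditioned on an event, so
   its KL divergence from pi/Z is ln (Z / tZ) <= ln (1 / (1 - eps)) and the total
   variation distance is 1 - tZ / Z. *)

Lemma ler_sum_subset (R : numDomainType) (I : finType) (P Q : pred I) (F : I -> R) :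
  (forall i, P i -> Q i) -> (forall i, Q i -> 0 <= F i) ->
  \sum_(i | P i) F i <= \sum_(i | Q i) F i.
Proof.
move=> PQ F_ge0; rewrite [leRHS](bigID P) /=.
have -> : \sum_(i | P i) F i = \sum_(i | Q i && P i) F i.
  by apply: eq_bigl => i; case: (boolP (P i)) => [/PQ -> | _]; rewrite ?andbF.
by rewrite lerDl sumr_ge0 // => i /andP[/F_ge0].
Qed.

Lemma sum_set_interval_expr (R : comNzRingType) (T : finType) (x : R)
    (Rs U : {set T}) : [disjoint Rs & U] ->
  \sum_(S : {set T} | (Rs \subset S) && (S \subset Rs :|: U)) x ^+ (#|S| - #|Rs|)
    = (1 + x) ^+ #|U|.
Proof.
move cardU: #|U| => k; elim: k Rs U cardU => [|k IH] Rs U cardU dRU.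
  move/eqP: cardU; rewrite cards_eq0 => /eqP ->; rewrite setU0.
  rewrite expr0 (big_pred1 Rs) ?subnn ?expr0 // => S /=.
  by rewrite eqEsubset andbC.
have /set0Pn[a aU] : U != set0 by rewrite -card_gt0 cardU.
have aRs : a \notin Rs by rewrite (disjointFl dRU aU).
have cardUa : #|U :\ a| = k by move: cardU; rewrite (cardsD1 a U) aU add1n => -[].
have dRUa : [disjoint Rs & U :\ a] by apply: disjointWr dRU; exact: subsetDl.
have daRUa : [disjoint a |: Rs & U :\ a].
  rewrite disjoint_sym disjoints_subset; apply/subsetP => y; rewrite !inE.
  by case/andP=> /negPf -> /(disjointFl dRU) ->.
rewrite (bigID (fun S : {set T} => a \in S)) /=.
rewrite (eq_big (fun S : {set T} => (a |: Rs \subset S) && (S \subset (a |: Rs) :|: U :\ a))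
                (fun S : {set T} => x * x ^+ (#|S| - #|a |: Rs|))); first last.
- move=> S /andP[/andP[RsS _] aS].
  have : (#|a |: Rs| <= #|S|)%N by rewrite subset_leq_card // subUset sub1set aS.
  by rewrite -exprS cardsU1 aRs add1n => /subnSK ->.
- move=> S; rewrite subUset sub1set -setUA setUCA setD1K //.
  by rewrite andbC andbA [(a \in S) && _]andbC.
rewrite -big_distrr /= IH //.
rewrite (eq_bigl (fun S : {set T} => (Rs \subset S) && (S \subset Rs :|: U :\ a))) => [|S].
  by rewrite IH // exprS; ring.
have RsDa : Rs :\ a = Rs by apply/setDidPl; rewrite disjoint_sym disjoints1.
by rewrite -RsDa -setDUl subsetD1 RsDa andbA.
Qed.

Lemma ler_sum_exists (R : numDomainType) (I J : finType) (P : pred J)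
    (b : I -> pred J) (F : J -> R) :
  (forall j, P j -> 0 <= F j) ->
  \sum_(j | P j && [exists i, b i j]) F j <= \sum_i \sum_(j | P j && b i j) F j.
Proof.
move=> F_ge0; rewrite (exchange_big_dep P) /=; last by move=> i j _ /andP[].
apply: (@le_trans _ _ (\sum_(j | P j && [exists i, b i j]) \sum_(i | P j && b i j) F j)).
  apply: ler_sum => j /andP[Pj /existsP[i bij]].
  by rewrite (bigD1 i) ?Pj //= lerDl sumr_ge0 // => ? _; apply: F_ge0.
apply: ler_sum_subset => [j /andP[] // | j Pj].
by rewrite sumr_ge0 // => ? _; apply: F_ge0.
Qed.

Lemma exprz_subzn (R : unitRingType) (x : R) (m n : nat) : (m <= n)%N ->
  x ^ (m%:Z - n%:Z) = (x ^+ (n - m))^-1.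
Proof. by move=> mn; rewrite -opprB subzn // -invr_expz. Qed.

Section PruneWeight.
Variables (R : numFieldType) (T : finType).

Definition prune_weight (V Rs S : {set T}) : R :=
  (1 + #|V|%:R^-1) ^ (#|Rs|%:Z - #|V|%:Z) * #|V|%:R ^ (#|Rs|%:Z - #|S|%:Z).

Lemma prune_weight_ge0 (V Rs S : {set T}) : 0 <= prune_weight V Rs S.
Proof. by rewrite mulr_ge0 // exprz_ge0 // ?addr_ge0 ?invr_ge0. Qed.

(* With x = 1/#|V| the weight is x ^+ #|S :\: Rs| / (1 + x) ^+ #|V :\: Rs|,
   so the sum is a binomial expansion. *)
Lemma sum_prune_weight (V Rs : {set T}) : Rs \subset V -> V != set0 ->
  \sum_(S : {set T} | (Rs \subset S) && (S \subset V)) prune_weight V Rs S = 1.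
Proof.
move=> RsV V0; set x : R := #|V|%:R^-1.
have x_gt0 : 0 < x by rewrite invr_gt0 ltr0n card_gt0.
have leRsV : (#|Rs| <= #|V|)%N by exact: subset_leq_card.
have VE : Rs :|: V :\: Rs = V by rewrite -{1}(setIidPr RsV) setID.
have dRsVRs : [disjoint Rs & V :\: Rs].
  by rewrite disjoints_subset; apply/subsetP => y; rewrite !inE => ->.
rewrite (eq_bigr (fun S : {set T} =>
            ((1 + x) ^+ (#|V| - #|Rs|))^-1 * x ^+ (#|S| - #|Rs|))); last first.
  move=> S /andP[RsS _].
  by rewrite /prune_weight !exprz_subzn ?subset_leq_card // exprVn.
rewrite -big_distrr /= (eq_bigl (fun S : {set T} =>
            (Rs \subset S) && (S \subset Rs :|: V :\: Rs))) => [|S]; last by rewrite VE.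
rewrite sum_set_interval_expr // cardsDS // mulVf // expf_neq0 // gt_eqF //.
by rewrite ltr_wpDr // ltW.
Qed.
End PruneWeight.

Arguments prune_weight {R T} V Rs S.

Section Pruned.
Variables (R : realType) (T : finType) (V : {set T}) (g : {set T} -> R).

Definition pruned (eta : R) (S : {set T}) : bool :=
  (S != set0) && [forall j in S, g S < eta * prune_psi V g j S].

Lemma pruneE eta S : prune V g eta S = if pruned eta S then 0 else g S.
Proof. by []. Qed.

Lemma prune_psiE j S : prune_psi V g j S =
  \sum_(Rs : {set T} | (j \in Rs) && (Rs \subset S)) g Rs * prune_weight V Rs S.
Proof. by apply: eq_bigr => Rs _; rewrite mulrA. Qed.

Lemma pruned_le_sum_weight (eta : R) (S : {set T}) : 0 <= eta ->
  (forall Rs : {set T}, Rs \subset S -> 0 <= g Rs) -> pruned eta S ->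
  g S <= eta * \sum_(Rs : {set T} | Rs \subset S) g Rs * prune_weight V Rs S.
Proof.
move=> eta_ge0 g_ge0 /andP[/set0Pn[j jS] /forall_inP/(_ j jS)/ltW].
move/le_trans; apply; rewrite ler_wpM2l // prune_psiE.
apply: ler_sum_subset => [Rs /andP[] // | Rs RsS].
by rewrite mulr_ge0 ?g_ge0 ?prune_weight_ge0.
Qed.

End Pruned.

Section Parents.
Variable n : nat.
Implicit Types (A B : {set 'I_n * 'I_n}) (i k : 'I_n) (S : {set 'I_n}).

Definition set_parents A i S : {set 'I_n * 'I_n} :=
  [set p | if p.2 == i then p.1 \in S else p \in A].

Lemma parents_set_parents A i S k :
  parents (set_parents A i S) k = if k == i then S else parents A k.
Proof. by apply/setP => j; rewrite !inE /=; case: (k == i); rewrite ?inE. Qed.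

Lemma set_parents_sub A i S : S \subset parents A i -> set_parents A i S \subset A.
Proof.
move=> /subsetP SA; apply/subsetP => -[a b]; rewrite inE /=.
by case: eqP => // ->; move/SA; rewrite inE.
Qed.

Lemma set_parentsK A i S : set_parents (set_parents A i S) i (parents A i) = A.
Proof. by apply/setP => -[a b]; rewrite !inE /=; case: eqP => // ->. Qed.

Lemma is_dag_sub A B : B \subset A -> is_dag A -> is_dag B.
Proof.
move=> /subsetP BA /forall_inP dagA; apply/forall_inP => p pB.
apply: contra (dagA p (BA p pB)); apply: connect_sub => x y xy.
by apply: connect1; rewrite /arc_rel BA.
Qed.

Lemma parents_dag A i : is_dag A -> parents A i \subset [set~ i].
Proof.
move=> /forall_inP dagA; apply/subsetP => j; rewrite !inE => jiA.
by apply: contraNneq (dagA _ jiA) => /= ->.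
Qed.

End Parents.

Section Restriction.
Variables (R : realType) (I : finType) (P bad : pred I) (p q : I -> R).
Hypothesis p_ge0 : forall x, P x -> 0 <= p x.
Hypothesis qE : forall x, q x = if bad x then 0 else p x.
Let Z := \sum_(x | P x) p x.
Let tZ := \sum_(x | P x) q x.

Lemma sum_restrict_good : tZ = \sum_(x | P x && ~~ bad x) p x.
Proof.
rewrite /tZ (bigID bad) /= big1 ?add0r => [|x /andP[_ badx]]; last by rewrite qE badx.
by apply: eq_bigr => x /andP[_ /negPf badx]; rewrite qE badx.
Qed.

Lemma sum_restrict : Z = tZ + \sum_(x | P x && bad x) p x.
Proof. by rewrite sum_restrict_good /Z [LHS](bigID bad) /= addrC. Qed.

Lemma sum_restrict_pos : \sum_(x | P x && (0 < q x)) q x = tZ.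
Proof.
rewrite /tZ [RHS](bigID (fun x => 0 < q x)) /= [X in _ = _ + X]big1 ?addr0 //.
move=> x /andP[Px].
by rewrite qE; case: (bad x) => //; rewrite lt0r p_ge0 // andbT negbK => /eqP.
Qed.

Lemma kl_restrict : 0 < tZ ->
  \sum_(x | P x && (0 < q x)) (q x / tZ) * ln ((q x / tZ) / (p x / Z)) = ln (Z / tZ).
Proof.
move=> tZ_gt0.
have Z_gt0 : 0 < Z by rewrite sum_restrict ltr_wpDr // sumr_ge0 // => x /andP[/p_ge0].
rewrite (eq_bigr (fun x : I => q x / tZ * ln (Z / tZ))).
  by rewrite -!big_distrl /= sum_restrict_pos mulfV ?gt_eqF ?mul1r.
move=> x /andP[_]; rewrite qE; case: (bad x); rewrite ?ltxx // => px_gt0.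
by congr (_ * ln _); field; rewrite !gt_eqF.
Qed.

Lemma tv_restrict : 0 < tZ ->
  2^-1 * \sum_(x | P x) `|p x / Z - q x / tZ| = 1 - tZ / Z.
Proof.
move=> tZ_gt0.
set B := \sum_(x | P x && bad x) p x.
have B_ge0 : 0 <= B by rewrite sumr_ge0 // => x /andP[/p_ge0].
have Z_gt0 : 0 < Z by rewrite sum_restrict ltr_wpDr.
have tZ_le : tZ <= Z by rewrite sum_restrict lerDl.
rewrite (bigID bad) /=.
rewrite (eq_bigr (fun x => p x * Z^-1)) => [|x /andP[Px badx]]; last first.
  by rewrite qE badx mul0r subr0 ger0_norm // divr_ge0 ?p_ge0 // ltW.
rewrite [X in _ + X](eq_bigr (fun x => p x * (tZ^-1 - Z^-1))); last first.
  move=> x /andP[Px /negPf badx]; rewrite qE badx ler0_norm; first by rewrite opprB mulrBr.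
  by rewrite subr_le0 ler_wpM2l ?p_ge0 // lef_pV2 ?posrE.
rewrite -!big_distrl /= -/B -sum_restrict_good.
have -> : B = Z - tZ by rewrite sum_restrict addrC addKr.
by field; rewrite !gt_eqF.
Qed.

End Restriction.

Section Scores.
Variables (R : realType) (n : nat).
Implicit Types (f : 'I_n -> {set 'I_n} -> R) (A : {set 'I_n * 'I_n}).
Implicit Types (i : 'I_n) (S : {set 'I_n}).

Lemma scoreD1 f A i :
  score f A = f i (parents A i) * \prod_(k | k != i) f k (parents A k).
Proof. by rewrite /score (bigD1 i). Qed.

Lemma score_set_parents f A i S :
  score f (set_parents A i S) = f i S * \prod_(k | k != i) f k (parents A k).
Proof.
rewrite (scoreD1 _ _ i) parents_set_parents eqxx; congr (_ * _).
by apply: eq_bigr => k /negPf ki; rewrite parents_set_parents ki.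
Qed.

Lemma score_ge0 f A :
  (forall i S, S \subset [set~ i] -> 0 <= f i S) -> is_dag A -> 0 <= score f A.
Proof. by move=> f_ge0 dagA; rewrite prodr_ge0 // => k _; apply/f_ge0/parents_dag. Qed.

Variable pi : 'I_n -> {set 'I_n} -> R.

Lemma score_pruned_scores (eps : R) A :
  score (pruned_scores pi eps) A =
  if [exists i, pruned [set~ i] (pi i) (eps / n%:R) (parents A i)] then 0 else score pi A.
Proof.
case: ifP => [/existsP[i prunedAi] | /negbT]; last first.
  rewrite negb_exists => /forallP unprunedA.
  by apply: eq_bigr => k _; rewrite /pruned_scores pruneE (negPf (unprunedA k)).
by rewrite (scoreD1 _ _ i) /pruned_scores pruneE prunedAi mul0r.
Qed.

Hypothesis pi_ge0 : forall i S, S \subset [set~ i] -> 0 <= pi i S.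

Section Node.
Variable i : 'I_n.

(* What a DAG pruned at i is charged to: the DAGs obtained by replacing the
   parents of i by a subset Rs of them. *)
Definition reparent_mass A : R :=
  \sum_(Rs : {set 'I_n} | Rs \subset parents A i)
     score pi (set_parents A i Rs) * prune_weight [set~ i] Rs (parents A i).

Lemma score_le_reparent_mass (eta : R) A : 0 <= eta -> is_dag A ->
  pruned [set~ i] (pi i) eta (parents A i) -> score pi A <= eta * reparent_mass A.
Proof.
move=> eta_ge0 dagA prunedA.
set rest := \prod_(k | k != i) pi k (parents A k).
have rest_ge0 : 0 <= rest by rewrite prodr_ge0 // => k _; apply/pi_ge0/parents_dag.
have -> : reparent_mass A =
    (\sum_(Rs : {set 'I_n} | Rs \subset parents A i)
       pi i Rs * prune_weight [set~ i] Rs (parents A i)) * rest.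
  rewrite big_distrl; apply: eq_bigr => Rs _.
  by rewrite score_set_parents mulrAC.
rewrite (scoreD1 _ _ i) mulrA ler_wpM2r // pruned_le_sum_weight // => Rs RsA.
by apply/pi_ge0/(subset_trans RsA)/parents_dag.
Qed.

Lemma sum_reparent_mass_le : (1 < n)%N ->
  \sum_(A | is_dag A) reparent_mass A <= partition_fn pi.
Proof.
move=> n_gt1.
have V_neq0 : [set~ i] != set0 by rewrite -card_gt0 cardsC1 card_ord -subn1 subn_gt0.
pose w (q : {set 'I_n * 'I_n} * {set 'I_n}) :=
  score pi q.1 * prune_weight [set~ i] (parents q.1 i) q.2.
pose h (p : {set 'I_n * 'I_n} * {set 'I_n}) := (set_parents p.1 i p.2, parents p.1 i).
pose D := [set p : {set 'I_n * 'I_n} * {set 'I_n} |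
  is_dag p.1 && (p.2 \subset parents p.1 i)].
have h_inj : {in D &, injective h}.
  move=> [A1 S1] [A2 S2] _ _ [eA eS].
  have -> : A1 = A2 by rewrite -(set_parentsK A1 i S1) -(set_parentsK A2 i S2) eA eS.
  by move: (congr1 (fun B => parents B i) eA); rewrite !parents_set_parents eqxx => ->.
have <- : \sum_(B | is_dag B)
    \sum_(S : {set 'I_n} | (parents B i \subset S) && (S \subset [set~ i])) w (B, S)
    = partition_fn pi.
  apply: eq_bigr => B dagB.
  by rewrite /w /= -big_distrr /= sum_prune_weight ?mulr1 ?parents_dag.
rewrite !pair_big_dep /= (eq_bigl (fun p => p \in D)); last by move=> p; rewrite inE.
rewrite (eq_bigr (fun p => w (h p))); last first.
  by move=> [A Rs] _; rewrite /w /h /= parents_set_parents eqxx.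
rewrite -(big_imset w h_inj) /=; apply: ler_sum_subset.
  move=> q /imsetP[[A Rs]]; rewrite inE /= => /andP[dagA RsA] -> /=.
  rewrite parents_set_parents eqxx RsA parents_dag //.
  by rewrite (is_dag_sub (set_parents_sub RsA)).
by move=> q /andP[dagq _]; rewrite mulr_ge0 ?score_ge0 ?prune_weight_ge0.
Qed.

Lemma pruned_mass_le (eta : R) : (1 < n)%N -> 0 <= eta ->
  \sum_(A | is_dag A && pruned [set~ i] (pi i) eta (parents A i)) score pi A
    <= eta * partition_fn pi.
Proof.
move=> n_gt1 eta_ge0.
apply: le_trans (ler_wpM2l eta_ge0 (sum_reparent_mass_le n_gt1)); rewrite big_distrr /=.
apply: (@le_trans _ _ (\sum_(A | is_dag A && pruned [set~ i] (pi i) eta (parents A i))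
                         eta * reparent_mass A)).
  by apply: ler_sum => A /andP[dagA prunedA]; apply: score_le_reparent_mass.
apply: ler_sum_subset => [A /andP[] // | A dagA].
rewrite mulr_ge0 // sumr_ge0 // => Rs RsA.
by rewrite mulr_ge0 ?prune_weight_ge0 // score_ge0 // (is_dag_sub (set_parents_sub RsA)).
Qed.

End Node.

Lemma sum_score_pruned_le (eta : R) : (1 < n)%N -> 0 <= eta ->
  \sum_(A | is_dag A && [exists i, pruned [set~ i] (pi i) eta (parents A i)]) score pi A
    <= eta *+ n * partition_fn pi.
Proof.
move=> n_gt1 eta_ge0.
apply: le_trans (ler_sum_exists (fun i A => pruned [set~ i] (pi i) eta (parents A i)) _) _.
  by move=> A; apply: score_ge0.
apply: (@le_trans _ _ (\sum_(i < n) eta * partition_fn pi)).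
  by apply: ler_sum => i _; apply: pruned_mass_le.
by rewrite sumr_const card_ord mulrnAl.
Qed.

End Scores.

Lemma ln_div_le (R : realType) (eps x y : R) : 0 < eps < 1 -> 0 < x -> 0 < y ->
  (1 - eps) * x <= y -> ln (x / y) <= eps / (1 - eps).
Proof.
move=> /andP[eps_gt0 eps_lt1] x_gt0 y_gt0 le_xy.
have e_gt0 : 0 < 1 - eps by rewrite subr_gt0.
have r_ge0 : 0 <= eps / (1 - eps) by rewrite divr_ge0 // ltW.
apply: le_trans (le_ln1Dx _); last exact: lt_le_trans (ltrN10 _) r_ge0.
have -> : 1 + eps / (1 - eps) = (1 - eps)^-1 by field; rewrite gt_eqF.
rewrite ler_ln ?posrE ?divr_gt0 ?invr_gt0 // ler_pdivrMr // -ler_pdivrMl ?invr_gt0 //.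
by rewrite invrK.
Qed.

Theorem theorem2 (R : realType) (n : nat) (eps : R)
  (pi : 'I_n -> {set 'I_n} -> R) :
  (2 <= n)%N -> 0 < eps < 1 ->
  (forall (i : 'I_n) (S : {set 'I_n}), S \subset [set~ i] -> 0 <= pi i S) ->
  0 < partition_fn pi ->
  let tpi := pruned_scores pi eps in
  let Z := partition_fn pi in
  let tZ := partition_fn tpi in
  [/\ tZ >= (1 - eps) * Z,
      \sum_(A : {set 'I_n * 'I_n} | is_dag A && (0 < score tpi A))
         (score tpi A / tZ) * ln ((score tpi A / tZ) / (score pi A / Z))
        <= eps / (1 - eps)
    & 2^-1 * \sum_(A : {set 'I_n * 'I_n} | is_dag A)
         `|score pi A / Z - score tpi A / tZ| <= eps].
Proof.
move=> n_gt1 /andP[eps_gt0 eps_lt1] pi_ge0 Z_gt0 tpi Z tZ.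
have score_pi_ge0 A : is_dag A -> 0 <= score pi A by apply: score_ge0.
have scoreE := score_pruned_scores pi eps.
have eps_n : eps / n%:R *+ n = eps.
  by rewrite -[LHS]mulr_natr divfK // pnatr_eq0 -lt0n ltnW.
have := sum_score_pruned_le pi_ge0 n_gt1 (divr_ge0 (ltW eps_gt0) (ler0n _ n)).
rewrite eps_n -/Z; set B := \sum_(A | _) _ => B_le.
have Z_split : Z = tZ + B := sum_restrict _ scoreE.
have tZ_ge : (1 - eps) * Z <= tZ by lra.
have tZ_gt0 : 0 < tZ by apply: lt_le_trans tZ_ge; rewrite mulr_gt0 // subr_gt0.
split => //.
  by rewrite (kl_restrict score_pi_ge0 scoreE) // ln_div_le ?eps_gt0.
by rewrite (tv_restrict score_pi_ge0 scoreE) // lerBlDr -lerBlDl ler_pdivlMr.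
Qed.
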